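(* Let $\ell\ge1$ be an integer and $p$ an integer with $-1\le p\le \ell-1$. Then, as an identity of meromorphic functions of $x$, $$\Delta^\ell\left[\binom{x+p}{\ell}\psi(x)\right] = H_\ell+\psi(x+p+1),$$ where $\Delta g(x)=g(x+1)-g(x)$ is the forward difference operator.
   Context: $\psi=\Gamma'/\Gamma$ is the digamma function, $H_\ell=1+\frac12+\cdots+\frac1\ell$ the harmonic number, and $\binom{x}{n}=\frac{x(x-1)\cdots(x-n+1)}{n!}$ the generalized binomial coefficient. *)

From Stdlib Require Import Reals ZArith.
From Coquelicot Require Import Coquelicot.
Open Scope C_scope.

Fixpoint harmonic (n : nat) : R :=
  match n with
  | O => 0%R
  | S m => (harmonic m + / INR (S m))%R
  end.

Definition euler_gamma : R :=
  real (Lim_seq (fun n => harmonic n - ln (INR n)))%R.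

(** Digamma psi = Gamma'/Gamma, via its classical series expansion
    psi(z) = -gamma + sum_{n>=0} (1/(n+1) - 1/(n+z)),
    valid for z not in {0,-1,-2,...}. *)
Definition digamma_term (z : C) (n : nat) : C :=
  / RtoC (INR n + 1) - / (z + RtoC (INR n)).

Definition digamma (z : C) : C :=
  RtoC (- euler_gamma) +
  (Series (fun n => Re (digamma_term z n)), Series (fun n => Im (digamma_term z n))).

Fixpoint falling (x : C) (n : nat) : C :=
  match n with
  | O => 1
  | S m => falling x m * (x - RtoC (INR m))
  end.

Definition gbinom (x : C) (n : nat) : C := falling x n / RtoC (INR (fact n)).

Definition fdiff (g : C -> C) : C -> C := fun x => g (x + 1) - g x.

Fixpoint fdiff_iter (l : nat) (g : C -> C) : C -> C :=
  match l with
  | O => g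
  | S m => fdiff (fdiff_iter m g)
  end.

Definition nonpos_int (z : C) : Prop := exists n : nat, z = RtoC (- INR n).

From Stdlib Require Import Reals ZArith Lra Lia FunctionalExtensionality.
From Coquelicot Require Import Coquelicot.
Open Scope C_scope.

(* The recurrence psi(y + 1) = psi(y) + 1/y and Pascal's rule turn one forward
   difference of binom(y + c, l + 1) psi(y) into
     binom(y + c, l) psi(y)     + binom(y + c + 1, l + 1) / y, or
     binom(y + c, l) psi(y + 1) + binom(y + c, l + 1) / y.
   For an integer 0 <= s <= l, binom(y + s, l + 1) / y is a product of l monic
   linear factors divided by (l + 1)!, so its l-th difference is
   l! / (l + 1)! = 1 / (l + 1).  Hence Delta^(l+1) adds 1 / (l + 1) to the value
   of Delta^l, computed by induction on l: for p = -1 with the first form, and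
   for p >= 0 with the second, lowering p by one and moving x to x + 1. *)

Lemma is_series_telescope (u : nat -> R) : is_lim_seq u 0%R ->
  is_series (fun n => u n - u (S n))%R (u 0%nat).
Proof.
  intros Hu.
  assert (Hsum : forall n, sum_n (fun k => u k - u (S k))%R n = (u 0%nat - u (S n))%R).
  { induction n as [|n IH]; [now rewrite sum_O|].
    rewrite sum_Sn, IH. unfold plus; simpl. ring. }
  assert (Hlim : is_lim_seq (sum_n (fun k => u k - u (S k))%R) (u 0%nat)).
  { apply (is_lim_seq_ext (fun n => u 0%nat - u (S n))%R); [intros n; now rewrite Hsum|].
    replace (Finite (u 0%nat)) with (Rbar_minus (u 0%nat) 0) by (simpl; f_equal; ring).
    apply (is_lim_seq_minus' (fun _ => u 0%nat) (fun n => u (S n))).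
    - apply is_lim_seq_const.
    - now apply (is_lim_seq_incr_1 u). }
  exact Hlim.
Qed.

Lemma is_lim_seq_inv_INR_S : is_lim_seq (fun n => / (INR n + 1))%R 0%R.
Proof.
  replace (Finite 0) with (Rbar_inv p_infty) by reflexivity.
  apply is_lim_seq_inv; [|discriminate].
  apply (is_lim_seq_ext (fun n => INR (S n))); [intros; apply S_INR|].
  apply (is_lim_seq_incr_1 INR), is_lim_seq_INR.
Qed.

Lemma ex_series_inv_INR_S_SS :
  ex_series (fun k => / ((INR k + 1) * (INR k + 2)))%R.
Proof.
  exists (/ (INR 0 + 1))%R.
  apply (is_series_ext (fun k => / (INR k + 1) - / (INR (S k) + 1))%R).
  - intros k. assert (Hk : (/ (INR k + 1) - / (INR (S k) + 1) =
                            / ((INR k + 1) * (INR k + 2)))%R).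
    { rewrite S_INR. pose proof (pos_INR k). field. lra. }
    exact Hk.
  - apply (is_series_telescope (fun k => / (INR k + 1))%R), is_lim_seq_inv_INR_S.
Qed.

Lemma RtoC_neq_0 (r : R) : r <> 0%R -> RtoC r <> 0.
Proof. intros Hr E. apply Hr. now injection E. Qed.

Lemma RtoC_INR_S (n : nat) : RtoC (INR (S n)) = RtoC (INR n) + 1.
Proof. now rewrite S_INR, RtoC_plus. Qed.

Lemma im_le_Cmod (c : C) : (Rabs (Im c) <= Cmod c)%R.
Proof.
  destruct c as [a b]. unfold Cmod, Im; simpl.
  rewrite <- sqrt_Rsqr_abs. apply sqrt_le_1_alt. unfold Rsqr.
  pose proof (Rle_0_sqr a). unfold Rsqr in *. nra.
Qed.

Lemma Cmod_plus_INR_ge (z : C) (n : nat) :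
  (INR n - Cmod z <= Cmod (z + RtoC (INR n)))%R.
Proof.
  pose proof (Cmod_triangle (z + RtoC (INR n)) (- z)) as T.
  replace (z + RtoC (INR n) + - z) with (RtoC (INR n)) in T by ring.
  rewrite Cmod_R, Cmod_opp, Rabs_pos_eq in T by apply pos_INR. lra.
Qed.

Lemma nonpos_int_plus_INR (z : C) (n : nat) :
  ~ nonpos_int z -> z + RtoC (INR n) <> 0.
Proof.
  intros Hz E. apply Hz. exists n.
  replace z with (z + RtoC (INR n) - RtoC (INR n)) by ring.
  rewrite E, RtoC_opp. ring.
Qed.

Lemma digamma_term_fraction (z : C) (n : nat) : z + RtoC (INR n) <> 0 ->
  digamma_term z n = (z - 1) / (RtoC (INR n + 1) * (z + RtoC (INR n))).
Proof.
  intros Hz. unfold digamma_term.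
  assert (Hn : RtoC (INR n + 1) <> 0) by (apply RtoC_neq_0; pose proof (pos_INR n); lra).
  rewrite RtoC_plus in *. field. auto.
Qed.

(* For n >= N > 2|z| + 2 one has |z + n| >= (n - N + 2)/2, whence the
   quadratic decay of the terms. *)
Lemma ex_series_Cmod_digamma_term (z : C) : ~ nonpos_int z ->
  ex_series (fun n => Cmod (digamma_term z n)).
Proof.
  intros Hz.
  destruct (INR_unbounded (2 * Cmod z + 2)) as [N HN].
  apply (ex_series_incr_n _ N).
  apply (@ex_series_le R_AbsRing R_CompleteNormedModule _
           (fun k => 2 * Cmod (z - 1) * / ((INR k + 1) * (INR k + 2)))%R).
  2: apply (ex_series_scal (2 * Cmod (z - 1))%R _ ex_series_inv_INR_S_SS).
  intros k. rewrite digamma_term_fraction by now apply nonpos_int_plus_INR.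
  pose proof (Cmod_plus_INR_ge z (N + k)) as Hge.
  pose proof (nonpos_int_plus_INR z (N + k) Hz) as Hnz.
  rewrite plus_INR in Hge, Hnz |- *.
  pose proof (pos_INR k). pose proof (pos_INR N).
  pose proof (Cmod_ge_0 z). pose proof (Cmod_ge_0 (z - 1)).
  rewrite Cmod_div.
  2: { apply Cmult_neq_0; [apply RtoC_neq_0|exact Hnz]. lra. }
  rewrite Cmod_mult, Cmod_R, (Rabs_pos_eq (INR N + INR k + 1)) by lra.
  set (D := Cmod (z + RtoC (INR N + INR k))) in *.
  assert (HD : (D >= (INR k + 2) / 2)%R) by lra.
  unfold norm; simpl; unfold abs; simpl.
  rewrite Rabs_pos_eq.
  2: { apply Rmult_le_pos; auto. apply Rlt_le, Rinv_0_lt_compat. nra. }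
  unfold Rdiv.
  replace (2 * Cmod (z - 1) * / ((INR k + 1) * (INR k + 2)))%R
    with (Cmod (z - 1) * / ((INR k + 1) * ((INR k + 2) / 2)))%R by (field; lra).
  apply Rmult_le_compat_l; auto.
  apply Rinv_le_contravar; [nra|]. apply Rmult_le_compat; lra.
Qed.

Lemma digamma_term_succ (z : C) (n : nat) :
  digamma_term (z + 1) n =
  digamma_term z n + (/ (z + RtoC (INR n)) - / (z + RtoC (INR (S n)))).
Proof.
  unfold digamma_term. rewrite RtoC_INR_S.
  replace (z + 1 + RtoC (INR n)) with (z + (RtoC (INR n) + 1)) by ring. ring.
Qed.

Section DigammaProjection.

(* [proj] stands for [Re] or [Im]: the two real series defining [digamma]
   are handled at once. *)
Variable proj : C -> R.
Hypothesis proj_minus : forall a b, proj (a - b) = (proj a - proj b)%R.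
Hypothesis proj_bound : forall c, (Rabs (proj c) <= Cmod c)%R.

Lemma ex_series_proj_Cmod (a : nat -> C) :
  ex_series (fun n => Cmod (a n)) -> ex_series (fun n => proj (a n)).
Proof.
  apply (@ex_series_le R_AbsRing R_CompleteNormedModule). intros n. apply proj_bound.
Qed.

Lemma is_lim_seq_proj_Cmod (a : nat -> C) :
  is_lim_seq (fun n => Cmod (a n)) 0%R -> is_lim_seq (fun n => proj (a n)) 0%R.
Proof.
  intros Ha. apply is_lim_seq_abs_0.
  apply (is_lim_seq_le_le (fun _ => 0%R) _ (fun n => Cmod (a n))); [|apply is_lim_seq_const|exact Ha].
  intros n. split; [apply Rabs_pos|apply proj_bound].
Qed.

(* The reciprocals 1/(z+n) telescope between the terms at z + 1 and at z,
   and they tend to 0 because 1/(z+n) = 1/(n+1) - digamma_term z n. *)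
Lemma Series_proj_digamma_term_succ (z : C) : ~ nonpos_int z ->
  Series (fun n => proj (digamma_term (z + 1) n)) =
  (Series (fun n => proj (digamma_term z n)) + proj (/ z))%R.
Proof.
  intros Hz.
  pose proof (ex_series_Cmod_digamma_term z Hz) as Hex.
  set (w := fun n => / (z + RtoC (INR n))).
  assert (Hw : is_lim_seq (fun n => Cmod (w n)) 0%R).
  { apply (is_lim_seq_le_le (fun _ => 0%R) _
             (fun n => / (INR n + 1) + Cmod (digamma_term z n))%R).
    - intros n. split; [apply Cmod_ge_0|].
      replace (w n) with (RtoC (/ (INR n + 1)) - digamma_term z n).
      + eapply Rle_trans; [apply Cmod_triangle|].
        rewrite Cmod_opp, Cmod_R, Rabs_pos_eq; [lra|].
        pose proof (pos_INR n). apply Rlt_le, Rinv_0_lt_compat. lra.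
      + unfold digamma_term, w. rewrite RtoC_inv by (pose proof (pos_INR n); lra).
        rewrite RtoC_plus. ring.
    - apply is_lim_seq_const.
    - replace (Finite 0) with (Rbar_plus 0 0) by (simpl; f_equal; ring).
      apply is_lim_seq_plus'; [apply is_lim_seq_inv_INR_S|].
      now apply ex_series_lim_0. }
  rewrite (Series_ext _ (fun n => proj (digamma_term z n) + (proj (w n) - proj (w (S n))))%R).
  2: { intros n. rewrite digamma_term_succ. fold (w n) (w (S n)).
       replace (digamma_term z n + (w n - w (S n)))
         with (digamma_term z n - (w (S n) - w n)) by ring.
       rewrite !proj_minus. ring. }
  rewrite Series_plus.
  - f_equal. apply is_series_unique.
    replace (proj (/ z)) with (proj (w 0%nat)) by (unfold w; simpl INR; now rewrite Cplus_0_r).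
    apply (is_series_telescope (fun n => proj (w n))), is_lim_seq_proj_Cmod, Hw.
  - now apply ex_series_proj_Cmod.
  - eexists. apply (is_series_telescope (fun n => proj (w n))), is_lim_seq_proj_Cmod, Hw.
Qed.

End DigammaProjection.

Lemma digamma_succ (z : C) : ~ nonpos_int z -> digamma (z + 1) = digamma z + / z.
Proof.
  intros Hz. unfold digamma.
  rewrite (Series_proj_digamma_term_succ Re) by (reflexivity || apply re_le_Cmod || exact Hz).
  rewrite (Series_proj_digamma_term_succ Im) by (reflexivity || apply im_le_Cmod || exact Hz).
  destruct (/ z) as [a b]. apply injective_projections; simpl; ring.
Qed.

Lemma fdiff_iter_S_inner (m : nat) (g : C -> C) (x : C) :
  fdiff_iter (S m) g x = fdiff_iter m (fdiff g) x.
Proof.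
  revert x. induction m as [|m IH]; intros x; [reflexivity|].
  change (fdiff_iter (S (S m)) g x)
    with (fdiff_iter (S m) g (x + 1) - fdiff_iter (S m) g x).
  now rewrite !IH.
Qed.

Lemma fdiff_iter_local (n : nat) (f g : C -> C) (x : C) :
  (forall j, (j <= n)%nat -> f (x + RtoC (INR j)) = g (x + RtoC (INR j))) ->
  fdiff_iter n f x = fdiff_iter n g x.
Proof.
  revert x. induction n as [|n IH]; intros x Hfg.
  - specialize (Hfg 0%nat (le_n 0)). simpl in *. now rewrite Cplus_0_r in Hfg.
  - simpl. unfold fdiff. rewrite (IH x), (IH (x + 1)); [reflexivity| |].
    + intros j Hj. rewrite <- Cplus_assoc, (Cplus_comm 1), <- RtoC_INR_S.
      apply Hfg. lia.
    + intros j Hj. apply Hfg. lia.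
Qed.

Lemma fdiff_iter_plus (n : nat) (f g : C -> C) (x : C) :
  fdiff_iter n (fun y => f y + g y) x = fdiff_iter n f x + fdiff_iter n g x.
Proof.
  revert x. induction n as [|n IH]; intros x; [reflexivity|].
  simpl. unfold fdiff. rewrite !IH. ring.
Qed.

Lemma fdiff_iter_scal (n : nat) (c : C) (f : C -> C) (x : C) :
  fdiff_iter n (fun y => c * f y) x = c * fdiff_iter n f x.
Proof.
  revert x. induction n as [|n IH]; intros x; [reflexivity|].
  simpl. unfold fdiff. rewrite !IH. ring.
Qed.

Lemma fdiff_iter_shift (n : nat) (f : C -> C) (x : C) :
  fdiff_iter n (fun y => f (y + 1)) x = fdiff_iter n f (x + 1).
Proof.
  revert x. induction n as [|n IH]; intros x; [reflexivity|].
  simpl. unfold fdiff. now rewrite !IH.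
Qed.

Lemma fdiff_iter_mul_linear (k : nat) (f : C -> C) (a x : C) :
  fdiff_iter (S k) (fun y => f y * (y + a)) x =
  fdiff_iter (S k) f x * (x + RtoC (INR (S k)) + a)
  + RtoC (INR (S k)) * fdiff_iter k f x.
Proof.
  revert x. induction k as [|k IH]; intros x.
  - simpl. unfold fdiff. ring.
  - change (fdiff_iter (S (S k)) ?g x) with (fdiff_iter (S k) g (x + 1) - fdiff_iter (S k) g x).
    rewrite !IH.
    change (fdiff_iter (S k) f ?y) with (fdiff_iter k f (y + 1) - fdiff_iter k f y).
    rewrite !RtoC_INR_S. ring.
Qed.

Inductive monic_linear_product : nat -> (C -> C) -> Prop :=
| monic_linear_product_1 : monic_linear_product 0 (fun _ => 1)
| monic_linear_product_mul n f a :
    monic_linear_product n f -> monic_linear_product (S n) (fun y => f y * (y + a)).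

Lemma monic_linear_product_ext (n : nat) (f g : C -> C) :
  monic_linear_product n f -> (forall y, f y = g y) -> monic_linear_product n g.
Proof. intros Hf Hfg. now apply functional_extensionality in Hfg as <-. Qed.

Lemma fdiff_iter_monic_linear_product (n : nat) (f : C -> C) (x : C) :
  monic_linear_product n f -> fdiff_iter n f x = RtoC (INR (fact n)).
Proof.
  intros Hf. revert x. induction Hf as [|n f a Hf IH]; intros x; [reflexivity|].
  rewrite fdiff_iter_mul_linear. simpl (fdiff_iter (S n) f x). unfold fdiff.
  rewrite !IH, fact_simpl, mult_INR, RtoC_mult. ring.
Qed.

Lemma monic_linear_product_falling (n : nat) (b : C) :
  monic_linear_product n (fun y => falling (y + b) n).
Proof.
  induction n as [|n IH]; [constructor|].
  apply (monic_linear_product_ext _ (fun y => falling (y + b) n * (y + (b - RtoC (INR n))))).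
  - now constructor.
  - intros y. simpl. ring.
Qed.

Lemma falling_shift_root_factor (q n : nat) : (q <= n)%nat ->
  exists f, monic_linear_product n f /\
            forall y, falling (y + RtoC (INR q)) (S n) = y * f y.
Proof.
  induction n as [|n IH]; intros Hq.
  - exists (fun _ => 1). split; [constructor|].
    intros y. assert (q = 0%nat) as -> by lia. simpl. ring.
  - destruct (Nat.eq_dec q (S n)) as [->|Hqn].
    + exists (fun y => falling (y + RtoC (INR (S n))) (S n)).
      split; [apply monic_linear_product_falling|].
      intros y. change (falling ?z (S (S n))) with (falling z (S n) * (z - RtoC (INR (S n)))).
      ring.
    + destruct (IH ltac:(lia)) as [f [Hf Hfy]].
      exists (fun y => f y * (y + (RtoC (INR q) - RtoC (INR (S n))))).
      split; [now constructor|].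
      intros y. change (falling ?z (S (S n))) with (falling z (S n) * (z - RtoC (INR (S n)))).
      rewrite Hfy. ring.
Qed.

Lemma RtoC_INR_fact_neq_0 (n : nat) : RtoC (INR (fact n)) <> 0.
Proof. apply RtoC_neq_0, INR_fact_neq_0. Qed.

Lemma fdiff_iter_gbinom_div (l q : nat) (x : C) : (q <= l)%nat ->
  (forall j, (j <= l)%nat -> x + RtoC (INR j) <> 0) ->
  fdiff_iter l (fun y => gbinom (y + RtoC (INR q)) (S l) / y) x = RtoC (/ INR (S l)).
Proof.
  intros Hq Hx. destruct (falling_shift_root_factor q l Hq) as [f [Hf Hfy]].
  rewrite (fdiff_iter_local _ _ (fun y => / RtoC (INR (fact (S l))) * f y)).
  2: { intros j Hj. unfold gbinom. rewrite Hfy.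
       pose proof (RtoC_INR_fact_neq_0 (S l)). field. auto. }
  rewrite fdiff_iter_scal, (fdiff_iter_monic_linear_product _ _ _ Hf).
  assert (HS : RtoC (INR (S l)) <> 0) by (apply RtoC_neq_0, not_0_INR; discriminate).
  pose proof (RtoC_INR_fact_neq_0 l).
  rewrite fact_simpl, mult_INR, RtoC_mult, RtoC_inv by (apply not_0_INR; discriminate).
  field. auto.
Qed.

Lemma gbinom_pascal (z : C) (m : nat) :
  gbinom (z + 1) (S m) = gbinom z (S m) + gbinom z m.
Proof.
  assert (Hfalling : falling (z + 1) (S m) = (z + 1) * falling z m).
  { induction m as [|m IH]; [simpl; ring|].
    change (falling (z + 1) (S (S m))) with (falling (z + 1) (S m) * (z + 1 - RtoC (INR (S m)))).
    rewrite IH, RtoC_INR_S. simpl (falling z (S m)). ring. }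
  unfold gbinom. rewrite Hfalling. simpl (falling z (S m)).
  rewrite fact_simpl, mult_INR, RtoC_mult.
  pose proof (RtoC_INR_fact_neq_0 m).
  assert (RtoC (INR (S m)) <> 0) by (apply RtoC_neq_0, not_0_INR; discriminate).
  rewrite RtoC_INR_S in *. field. auto.
Qed.

Lemma nonpos_int_neq_0 (y : C) : ~ nonpos_int y -> y <> 0.
Proof.
  intros Hy. pose proof (nonpos_int_plus_INR y 0 Hy) as H0.
  now rewrite Cplus_0_r in H0.
Qed.

Lemma fdiff_gbinom_digamma (c y : C) (l : nat) : ~ nonpos_int y ->
  fdiff (fun y => gbinom (y + c) (S l) * digamma y) y =
  gbinom (y + c) l * digamma y + gbinom (y + c + 1) (S l) / y.
Proof.
  intros Hy. pose proof (nonpos_int_neq_0 y Hy). unfold fdiff.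
  replace (y + 1 + c) with (y + c + 1) by ring.
  rewrite digamma_succ, gbinom_pascal by exact Hy. field. auto.
Qed.

Lemma fdiff_gbinom_digamma_shifted (c y : C) (l : nat) : ~ nonpos_int y ->
  fdiff (fun y => gbinom (y + c) (S l) * digamma y) y =
  gbinom (y + c) l * digamma (y + 1) + gbinom (y + c) (S l) / y.
Proof.
  intros Hy. pose proof (nonpos_int_neq_0 y Hy). unfold fdiff.
  replace (y + 1 + c) with (y + c + 1) by ring.
  rewrite digamma_succ, gbinom_pascal by exact Hy. field. auto.
Qed.

Lemma fdiff_iter_gbinom_digamma (l : nat) (p : Z) (x : C) :
  (-1 <= p <= Z.of_nat l - 1)%Z ->
  (forall k : nat, (k <= l)%nat -> ~ nonpos_int (x + RtoC (INR k))) ->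
  fdiff_iter l (fun y => gbinom (y + RtoC (IZR p)) l * digamma y) x
  = RtoC (harmonic l) + digamma (x + RtoC (IZR p) + 1).
Proof.
  revert p x. induction l as [|l IH]; intros p x Hp Hx.
  - assert (p = (-1)%Z) as -> by lia.
    replace (x + RtoC (IZR (-1)) + 1) with x by ring.
    unfold gbinom. simpl. field.
  - assert (Hx0 : forall j, (j <= S l)%nat -> x + RtoC (INR j) <> 0)
      by (intros j Hj; apply nonpos_int_neq_0, Hx, Hj).
    change (harmonic (S l)) with (harmonic l + / INR (S l))%R.
    rewrite fdiff_iter_S_inner, RtoC_plus.
    destruct (Z.eq_dec p (-1)) as [->|Hp1].
    + rewrite (fdiff_iter_local _ _ (fun y =>
          gbinom (y + RtoC (IZR (-1))) l * digamma y
          + gbinom (y + RtoC (INR 0)) (S l) / y)).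
      2: { intros j Hj. rewrite fdiff_gbinom_digamma by (apply Hx; lia).
           do 3 f_equal. simpl. ring. }
      rewrite fdiff_iter_plus.
      rewrite IH; [|lia|intros k Hk; apply Hx; lia].
      rewrite fdiff_iter_gbinom_div; [|lia|intros j Hj; apply Hx0; lia].
      replace (x + RtoC (IZR (-1)) + 1) with x by ring. ring.
    + destruct (Z_of_nat_complete p ltac:(lia)) as [q ->].
      rewrite <- INR_IZR_INZ.
      set (F := fun z => gbinom (z + RtoC (IZR (Z.of_nat q - 1))) l * digamma z).
      rewrite (fdiff_iter_local _ _ (fun y => F (y + 1) + gbinom (y + RtoC (INR q)) (S l) / y)).
      2: { intros j Hj. rewrite fdiff_gbinom_digamma_shifted by (apply Hx; lia).
           unfold F. rewrite minus_IZR, RtoC_minus, <- INR_IZR_INZ.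
           do 3 f_equal. ring. }
      rewrite fdiff_iter_plus, fdiff_iter_shift. unfold F.
      rewrite IH; [|lia|].
      2: { intros k Hk. rewrite <- Cplus_assoc, (Cplus_comm 1), <- RtoC_INR_S. apply Hx. lia. }
      rewrite fdiff_iter_gbinom_div; [|lia|intros j Hj; apply Hx0; lia].
      rewrite minus_IZR, RtoC_minus, <- INR_IZR_INZ. 
      replace (x + 1 + (RtoC (INR q) - 1) + 1) with (x + RtoC (INR q) + 1) by ring. ring.
Qed.

Theorem lemma3p1 (l : nat) (p : Z) (x : C) :
  (1 <= l)%nat ->
  (-1 <= p <= Z.of_nat l - 1)%Z ->
  (forall k : nat, (k <= l)%nat -> ~ nonpos_int (x + RtoC (INR k))) ->
  fdiff_iter l (fun y => gbinom (y + RtoC (IZR p)) l * digamma y) x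
  = RtoC (harmonic l) + digamma (x + RtoC (IZR p) + 1).
Proof.
  intros _. apply fdiff_iter_gbinom_digamma.
Qed.
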